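(* Let $(E,\mathscr{T},\le)$ be a $T_2$-preordered Tychonoff space such that, with $\mathcal{F}$ the family of continuous isotone functions $f:E\to[0,1]$, $G(\le)=\bigcap_{f\in\mathcal{F}}G_f$. Let $\beta:E\to\beta E$ be the Stone–Čech compactification with topology $\mathscr{T}_\beta$ and let $\le_\beta$ be the preorder on $\beta E$ with $G(\le_\beta)=\bigcap_{f\in\mathcal{F}}G_{\tilde f}$, where $\tilde f:\beta E\to[0,1]$ is the unique continuous extension of $f\circ\beta^{-1}$. Then $\le_\beta$ is the smallest closed preorder on $(\beta E,\mathscr{T}_\beta)$ inducing $\le$ on $E$; that is, if $R$ is the graph of any closed preorder on $\beta E$ with $(\beta\times\beta)^{-1}(R)=G(\le)$, then $G(\le_\beta)\subseteq R$.
   Context: $T_2$-preordered: the graph $G(\le)=\{(x,y):x\le y\}$ of the preorder is closed in $E\times E$. Isotone: $x\le y\Rightarrow f(x)\le f(y)$. $G_f=\{(x,y):f(x)\le f(y)\}$. A preorder is closed if its graph is closed in the product topology. *)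

From HB Require Import structures.
From mathcomp Require Import all_boot all_order all_algebra.
From mathcomp Require Import all_classical all_reals all_analysis.
Set Implicit Arguments. Unset Strict Implicit. Unset Printing Implicit Defensive.
Import Order.TTheory GRing.Theory Num.Theory.
Import numFieldNormedType.Exports.
Local Open Scope classical_set_scope.
Local Open Scope ring_scope.

Definition is_preorder (T : Type) (le : T -> T -> Prop) :=
  (forall x, le x x) /\ (forall x y z, le x y -> le y z -> le x z).

Definition graph (T : Type) (le : T -> T -> Prop) : set (T * T) :=
  [set p | le p.1 p.2].

Definition closed_preorder (T : topologicalType) (le : T -> T -> Prop) :=
  is_preorder le /\ closed (graph le).

Definition tychonoff_space (R : realType) (T : topologicalType) :=
  (forall (a : T) (B : set T), closed B -> ~ B a ->
     exists f : T -> R, continuous f /\ (forall x, 0 <= f x <= 1) /\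
       f a = 0 /\ (forall b, B b -> f b = 1))
  /\ hausdorff_space T.

Definition cont_isotone01 (R : realType) (E : topologicalType)
    (le : E -> E -> Prop) (f : E -> R) :=
  continuous f /\ (forall x, 0 <= f x <= 1) /\
  (forall x y, le x y -> f x <= f y).

Definition stone_cech (E bE : topologicalType) (beta : E -> bE) :=
  compact [set: bE] /\ hausdorff_space bE /\ continuous beta /\
  forall (K : topologicalType), compact [set: K] -> hausdorff_space K ->
  forall g : E -> K, continuous g ->
    (exists h : bE -> K, continuous h /\ h \o beta = g) /\
    (forall h1 h2 : bE -> K, continuous h1 -> continuous h2 ->
       h1 \o beta = g -> h2 \o beta = g -> h1 = h2).

Definition le_beta (R : realType) (E bE : topologicalType) (beta : E -> bE)
    (le : E -> E -> Prop) (x y : bE) :=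
  forall f : E -> R, cont_isotone01 le f ->
  forall ft : bE -> R, continuous ft -> ft \o beta = f -> ft x <= ft y.

From HB Require Import structures.
From mathcomp Require Import all_boot all_order all_algebra.
From mathcomp Require Import all_classical all_reals all_analysis.
From mathcomp Require Import lra.
Import Order.TTheory GRing.Theory Num.Theory.
Import numFieldNormedType.Exports.
Local Open Scope classical_set_scope.
Local Open Scope ring_scope.

Set Implicit Arguments.
Unset Strict Implicit.
Unset Printing Implicit Defensive.

(* The heart of the matter is Nachbin's separation theorem: on a compact
   Hausdorff space carrying a closed preorder R, any two points with ~ R x y
   are separated by a continuous isotone map g into [0,1] with g x = 1 and
   g y = 0.  Its proof is Urysohn's construction, run with pairs U <= C of an
   open and a closed decreasing set instead of open sets and their closures;
   compactness makes the up- and down-sets of closed sets closed, which is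
   what allows a normality argument to produce such pairs.  Given the
   theorem, if x <=_beta y but ~ R x y, the map g separating x from y is a
   continuous extension of the isotone map g o beta, so g x <= g y, which is
   absurd. *)

Lemma closed_image_compact (X Y : topologicalType) (f : X -> Y) (A : set X) :
  compact [set: X] -> hausdorff_space Y -> continuous f -> closed A ->
  closed (f @` A).
Proof.
move=> cX hY cf cA; apply: compact_closed => //.
apply: continuous_compact; first exact: continuous_subspaceT.
exact: (subclosed_compact cA cX).
Qed.

Lemma dyadic_between (R : realType) (a b : R) : 0 <= a -> a < b -> b <= 1 ->
  exists n k, (k < 2 ^ n)%N /\ a < k%:R / (2 ^ n)%:R < b.
Proof.
move=> a0 ab b1.
pose n := (Num.truncn ((b - a)^-1)).+1.
have p0 : 0 < ((2 ^ n)%:R : R) by rewrite ltr0n expn_gt0.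
have gap : 1 < (b - a) * (2 ^ n)%:R.
  rewrite mulrC -ltr_pdivrMr ?subr_gt0 // div1r.
  apply: (lt_le_trans (truncnS_gt _)); rewrite ler_nat; exact/ltnW/ltn_expl.
pose k := (Num.truncn (a * (2 ^ n)%:R)).+1.
have ak : a * (2 ^ n)%:R < k%:R by exact: truncnS_gt.
have ka : k%:R <= a * (2 ^ n)%:R + 1.
  rewrite /k -addn1 natrD lerD2r truncn_le; exact: mulr_ge0 (ltW p0).
have kb : k%:R / (2 ^ n)%:R < b.
  by rewrite ltr_pdivrMr //; apply: (le_lt_trans ka); lra.
exists n, k; split; last by rewrite kb andbT ltr_pdivlMr.
rewrite -(ltr_nat R); apply: (@lt_le_trans _ _ (b * (2 ^ n)%:R)).
  by rewrite -ltr_pdivrMr.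
by rewrite ger_pMl.
Qed.

Lemma double_or_doubleS k : (exists j, k = j.*2) \/ (exists j, k = j.*2.+1).
Proof.
rewrite -[k]odd_double_half; case: (odd k) => /=; [right|left]; by exists k./2.
Qed.

Definition up_set {X : Type} (r : X -> X -> Prop) (K : set X) :=
  [set y | exists2 k, K k & r k y].

Definition down_set {X : Type} (r : X -> X -> Prop) (K : set X) :=
  [set y | exists2 k, K k & r y k].

Definition down_closed {X : Type} (r : X -> X -> Prop) (S : set X) :=
  forall x y, r x y -> S y -> S x.

Section CompactPreorder.
Variables (R : realType) (X : topologicalType) (r : X -> X -> Prop).
Hypotheses (X_compact : compact [set: X]) (X_hausdorff : hausdorff_space X)
  (r_closed : closed_preorder r).

Let r_refl : forall x, r x x := proj1 (proj1 r_closed).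
Let r_trans : forall x y z, r x y -> r y z -> r x z := proj2 (proj1 r_closed).
Let graph_closed : closed (graph r) := proj2 r_closed.

Let XX_compact : compact [set: X * X].
Proof. by rewrite -setXTT; exact: compact_setX. Qed.

Lemma closed_up_set K : closed K -> closed (up_set r K).
Proof.
move=> cK; have -> : up_set r K = snd @` (graph r `&` fst @^-1` K).
  apply/seteqP; split=> [y [k Kk rky]|_ [[k y] [/= rky Kk] <-]].
    by exists (k, y).
  by exists k.
apply: closed_image_compact => //; first by move=> p; exact: cvg_snd.
by apply: closedI => //; apply: preimage_closed => // p _; exact: cvg_fst.
Qed.

Lemma closed_down_set K : closed K -> closed (down_set r K).
Proof.
move=> cK; have -> : down_set r K = fst @` (graph r `&` snd @^-1` K).
  apply/seteqP; split=> [y [k Kk ryk]|_ [[y k] [/= ryk Kk] <-]].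
    by exists (y, k).
  by exists k.
apply: closed_image_compact => //; first by move=> p; exact: cvg_fst.
by apply: closedI => //; apply: preimage_closed => // p _; exact: cvg_snd.
Qed.

Lemma down_closed_down_set K : down_closed r (down_set r K).
Proof. by move=> x y rxy [k Kk ryk]; exists k => //; exact: r_trans ryk. Qed.

Lemma down_closed_setC_up_set K : down_closed r (~` up_set r K).
Proof.
by move=> x y rxy nKy [k Kk rkx]; apply: nKy; exists k => //; exact: r_trans rxy.
Qed.

Definition nested_pair (pc : set X * set X) :=
  [/\ open pc.1, down_closed r pc.1, closed pc.2, down_closed r pc.2
    & pc.1 `<=` pc.2].

Lemma nested_pair_between (A W : set X) :
  closed A -> down_closed r A -> open W -> down_closed r W -> A `<=` W ->
  exists pc, [/\ nested_pair pc, A `<=` pc.1 & pc.2 `<=` W].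
Proof.
move=> cA dA oW dW AW.
have [|P /set_nbhsP] := @compact_normal X X_hausdorff X_compact A cA W.
  by apply/set_nbhsP; exists W; split.
move=> [N [oN AN NP]] PW.
exists (~` up_set r (~` N), down_set r (closure N)); split => /=.
- split => /=.
  + by rewrite openC; apply: closed_up_set; rewrite closedC.
  + exact: down_closed_setC_up_set.
  + by apply: closed_down_set; exact: closed_closure.
  + exact: down_closed_down_set.
  + move=> u nu; exists u; last exact: r_refl.
    by apply: subset_closure; apply: contrapT => nN; apply: nu; exists u.
- by move=> a Aa [k nNk rka]; exact/nNk/AN/(dA _ _ rka).
- by move=> c [p /(closureS NP) /PW Wp rcp]; exact: dW rcp Wp.
Qed.

Definition interpolate (p q : set X * set X) :=
  match pselect (exists pc, [/\ nested_pair pc, p.2 `<=` pc.1 & pc.2 `<=` q.1])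
  with left h => projT1 (cid h) | right _ => p end.

Lemma interpolateP p q :
  closed p.2 -> down_closed r p.2 -> open q.1 -> down_closed r q.1 ->
  p.2 `<=` q.1 ->
  [/\ nested_pair (interpolate p q), p.2 `<=` (interpolate p q).1
    & (interpolate p q).2 `<=` q.1].
Proof.
move=> cp dp oq dq pq; rewrite /interpolate.
case: pselect => [h|[]]; first exact: (projT2 (cid h)).
exact: nested_pair_between.
Qed.

Section Ladder.
Variables (P0 : set X * set X) (W : set X).
Hypotheses (P0_nested : nested_pair P0) (P0_W : P0.2 `<=` W) (W_open : open W)
  (W_down : down_closed r W).

(* [ladder n k] is the pair (U, C) attached to the dyadic k / 2^n of Urysohn's
   construction; index 2^n carries (W, setT), and indices above it are junk. *)
Fixpoint ladder (n k : nat) : set X * set X :=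
  match n with
  | 0 => if k == 0%N then P0 else (W, setT)
  | n'.+1 => if odd k then interpolate (ladder n' k./2) (ladder n' k./2.+1)
             else ladder n' k./2
  end.

Lemma ladder_double n j : ladder n.+1 j.*2 = ladder n j.
Proof. by rewrite /= odd_double doubleK. Qed.

Lemma ladder_doubleS n j :
  ladder n.+1 j.*2.+1 = interpolate (ladder n j) (ladder n j.+1).
Proof. by rewrite /= odd_double /= uphalf_double. Qed.

Lemma ladder_mul_exp2 n m k : ladder (n + m) (k * 2 ^ m) = ladder n k.
Proof.
elim: m => [|m IH]; first by rewrite addn0 muln1.
by rewrite addnS expnS mulnCA mul2n ladder_double.
Qed.

Lemma ladder_top n : ladder n (2 ^ n) = (W, setT).
Proof. by elim: n => [//|n IH]; rewrite expnS mul2n ladder_double. Qed.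

Lemma ladder_invariant n :
  (forall k, (k < 2 ^ n)%N -> nested_pair (ladder n k)) /\
  (forall k, (k < 2 ^ n)%N -> (ladder n k).2 `<=` (ladder n k.+1).1).
Proof.
elim: n => [|n [IN IS]].
  by split=> k; rewrite expn0 ltnS leqn0 => /eqP ->.
have up_next j : (j < 2 ^ n)%N ->
    open (ladder n j.+1).1 /\ down_closed r (ladder n j.+1).1.
  rewrite -ltnS ltnS leq_eqVlt => /orP [/eqP ->|/IN [] //].
  by rewrite ladder_top.
have mid j : (j < 2 ^ n)%N ->
  [/\ nested_pair (ladder n.+1 j.*2.+1),
      (ladder n.+1 j.*2).2 `<=` (ladder n.+1 j.*2.+1).1
    & (ladder n.+1 j.*2.+1).2 `<=` (ladder n.+1 j.*2.+2).1].
  move=> jn; have [_ _ c2 d2 _] := IN _ jn; have [oU dU] := up_next _ jn.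
  rewrite ladder_doubleS ladder_double -doubleS ladder_double.
  exact: interpolateP (IS _ jn).
split=> k; rewrite expnS mul2n; case: (double_or_doubleS k) => -[j ->].
- by rewrite ltn_double => /IN; rewrite ladder_double.
- by rewrite ltn_Sdouble => /mid [].
- by rewrite ltn_double => /mid [].
- by rewrite ltn_Sdouble => /mid [].
Qed.

Lemma ladder_nested n k : (k < 2 ^ n)%N -> nested_pair (ladder n k).
Proof. exact: (ladder_invariant n).1. Qed.

Lemma ladder_chain n k l : (k < l)%N -> (l <= 2 ^ n)%N ->
  (ladder n k).2 `<=` (ladder n l).1.
Proof.
elim: l => [//|l IH] kl ln; have ln' : (l < 2 ^ n)%N by [].
move: kl; rewrite ltnS leq_eqVlt => /orP [/eqP ->|kl].
  exact: (ladder_invariant n).2.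
move=> x /(IH kl (ltnW ln')) Ux; apply: (ladder_invariant n).2 => //.
by have [_ _ _ _ UC] := ladder_nested ln'; exact: UC.
Qed.

Lemma ladder_mono n m k l : (l <= 2 ^ m)%N ->
  (k%:R / (2 ^ n)%:R < l%:R / (2 ^ m)%:R :> R) ->
  (ladder n k).2 `<=` (ladder m l).1.
Proof.
move=> lm kl.
have pn : 0 < ((2 ^ n)%:R : R) by rewrite ltr0n expn_gt0.
have pm : 0 < ((2 ^ m)%:R : R) by rewrite ltr0n expn_gt0.
have klN : (k * 2 ^ m < l * 2 ^ n)%N.
  rewrite -(ltr_nat R) !natrM.
  by move: kl; rewrite ltr_pdivrMr // mulrAC ltr_pdivlMr.
rewrite -(ladder_mul_exp2 n m k) -(ladder_mul_exp2 m n l) (addnC m n).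
apply: ladder_chain => //.
by rewrite expnD mulnC leq_mul2l lm orbT.
Qed.

Definition ladder_levels (z : X) : set R :=
  [set v | v = 1 \/ exists n k,
     [/\ (k < 2 ^ n)%N, (ladder n k).1 z & v = k%:R / (2 ^ n)%:R]].

Definition ladder_fun (z : X) : R := inf (ladder_levels z).

Lemma ladder_levels_ge0 z : lbound (ladder_levels z) 0.
Proof. by move=> v [->|[n [k [_ _ ->]]]] //; exact: divr_ge0. Qed.

Lemma ladder_fun_le z v : ladder_levels z v -> ladder_fun z <= v.
Proof.
by move=> zv; apply: ge_inf => //; exists 0; exact: ladder_levels_ge0.
Qed.

Lemma ladder_fun_ge z c : lbound (ladder_levels z) c -> c <= ladder_fun z.
Proof. by apply: lb_le_inf; exists 1; left. Qed.

Lemma ladder_fun_ge0 z : 0 <= ladder_fun z.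
Proof. exact/ladder_fun_ge/ladder_levels_ge0. Qed.

Lemma ladder_fun_le1 z : ladder_fun z <= 1.
Proof. by apply: ladder_fun_le; left. Qed.

Lemma ladder_fun_isotone x y : r x y -> ladder_fun x <= ladder_fun y.
Proof.
move=> rxy; apply: ladder_fun_ge => v [->|[n [k [kn Uy ->]]]].
  exact: ladder_fun_le1.
apply: ladder_fun_le; right; exists n, k; split => //.
by have [_ dU _ _ _] := ladder_nested kn; exact: dU rxy Uy.
Qed.

Lemma ladder_fun_P0 z : P0.1 z -> ladder_fun z = 0.
Proof.
move=> P0z; apply/le_anti; rewrite ladder_fun_ge0 andbT.
have -> : (0 : R) = 0%:R / (2 ^ 0)%:R by rewrite mul0r.
by apply: ladder_fun_le; right; exists 0%N, 0%N.
Qed.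

Lemma ladder_fun_notW z : ~ W z -> ladder_fun z = 1.
Proof.
move=> nWz; apply/le_anti; rewrite ladder_fun_le1 /=.
apply: ladder_fun_ge => v [->|[n [k [kn Uz ->]]]] //; exfalso; apply: nWz.
have := ladder_chain kn (leqnn _); rewrite ladder_top; apply.
by have [_ _ _ _ UC] := ladder_nested kn; exact: UC.
Qed.

Lemma ladder_fun_nbhs_lt z e : 0 < e ->
  \forall t \near z, ladder_fun t < ladder_fun z + e.
Proof.
move=> e0; case: (ltP 1 (ladder_fun z + e)) => [gt1|le1].
  by apply: nearW => t; exact: le_lt_trans (ladder_fun_le1 t) gt1.
have fze : ladder_fun z < ladder_fun z + e by rewrite ltrDl.
have [v [->|[n [k [kn Uz ->]]]] vlt] :=
  inf_lt (ex_intro _ 1 (or_introl erefl)) fze.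
  by move: le1; rewrite leNgt vlt.
have [oU _ _ _ _] := ladder_nested kn.
apply: filterS (open_nbhs_nbhs (conj oU Uz)) => t Ut.
by apply: le_lt_trans vlt; apply: ladder_fun_le; right; exists n, k.
Qed.

Lemma ladder_fun_nbhs_gt z e : 0 < e ->
  \forall t \near z, ladder_fun z - e < ladder_fun t.
Proof.
move=> e0; case: (ltP (ladder_fun z - e) 0) => [lt0|ge0].
  by apply: nearW => t; exact: lt_le_trans lt0 (ladder_fun_ge0 t).
have [|n1 [k1 [k1n /andP [d1a d1b]]]] :=
  dyadic_between ge0 _ (ladder_fun_le1 z).
  by rewrite ltrBlDr ltrDl.
have [n2 [k2 [k2n /andP [d2a d2b]]]] :=
  dyadic_between (divr_ge0 (ler0n _ _) (ler0n _ _)) d1b (ladder_fun_le1 z).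
(* z lies outside C(d1), since it lies outside U(d2) with d1 < d2 < f z. *)
have nC1z : ~ (ladder n1 k1).2 z.
  move=> /(ladder_mono (ltnW k2n) d2a) U2z.
  have : ladder_fun z <= k2%:R / (2 ^ n2)%:R.
    by apply: ladder_fun_le; right; exists n2, k2.
  by rewrite leNgt d2b.
have [_ _ cC _ UC1] := ladder_nested k1n.
apply: filterS (open_nbhs_nbhs (conj (closed_openC cC) nC1z)) => t nC1t.
apply: lt_le_trans d1a _; apply: ladder_fun_ge => v [->|[n [k [kn Ut ->]]]].
  exact/ltW/(lt_le_trans d1b)/ladder_fun_le1.
rewrite leNgt; apply/negP => vd1; apply: nC1t; apply: UC1.
by have [_ _ _ _ UC] := ladder_nested kn; exact/(ladder_mono (ltnW k1n) vd1)/UC.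
Qed.

Lemma ladder_fun_continuous : continuous ladder_fun.
Proof.
move=> z; apply/cvgrPdist_lt => e e0.
apply: filterS (filterI (ladder_fun_nbhs_lt z e0) (ladder_fun_nbhs_gt z e0)).
by move=> t [lt gt]; rewrite ltr_distlC lt gt.
Qed.

End Ladder.

Theorem closed_preorder_separation x0 y0 : ~ r x0 y0 ->
  exists g : X -> R, [/\ continuous g, (forall x, 0 <= g x <= 1),
    (forall x y, r x y -> g x <= g y), g x0 = 1 & g y0 = 0].
Proof.
move=> nxy; pose A := down_set r [set y0]; pose W := ~` up_set r [set x0].
have cx0 : closed [set x0] by exact/accessible_closed_set1/hausdorff_accessible.
have cy0 : closed [set y0] by exact/accessible_closed_set1/hausdorff_accessible.
have oW : open W by rewrite openC; exact: closed_up_set.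
have AW : A `<=` W.
  by move=> a [_ -> ray] [_ -> rxa]; apply: nxy; exact: r_trans ray.
have dW : down_closed r W by exact: down_closed_setC_up_set.
have [P0 [P0N AP0 P0W]] := nested_pair_between (closed_down_set cy0)
  (@down_closed_down_set _) oW dW AW.
exists (ladder_fun P0 W); split.
- exact: ladder_fun_continuous P0N P0W oW dW.
- by move=> x; rewrite ladder_fun_ge0 ladder_fun_le1.
- exact: ladder_fun_isotone P0N P0W oW dW.
- apply: (ladder_fun_notW P0N P0W oW dW) => nW; apply: nW.
  by exists x0 => //; exact: r_refl.
- by apply: ladder_fun_P0; apply: AP0; exists y0.
Qed.

End CompactPreorder.

Theorem mainTheorem6 (R : realType) (E bE : topologicalType)
  (le : E -> E -> Prop) (beta : E -> bE) :
  tychonoff_space R E ->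
  closed_preorder le ->
  (forall x y, le x y <->
     (forall f : E -> R, cont_isotone01 le f -> f x <= f y)) ->
  stone_cech beta ->
  forall Rb : bE -> bE -> Prop,
    closed_preorder Rb ->
    (forall x y : E, Rb (beta x) (beta y) <-> le x y) ->
    graph (le_beta R beta le) `<=` graph Rb.
Proof.
move=> _ _ _ [bE_compact [bE_hausdorff [beta_cont _]]] Rb Rb_closed Rb_le.
move=> [x y] /= x_le_y; apply: contrapT => nRxy.
have [g [g_cont g01 g_iso gx gy]] :=
  closed_preorder_separation R bE_compact bE_hausdorff Rb_closed nRxy.
have g_beta_F : cont_isotone01 le (g \o beta).
  split; [|split].
  - by move=> a; apply: continuous_comp; [exact: beta_cont | exact: g_cont].
  - by move=> a; exact: g01.
  - by move=> a b /Rb_le; exact: g_iso.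
by have := x_le_y _ g_beta_F g g_cont erefl; rewrite gx gy ler10.
Qed.
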